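(* Let $\phi\in C^3((0,\infty))$, $\eta=\phi'$ and $\hat\eta(r)=\eta(r)+2\eta(2r)$, and suppose there are constants $0<a_0<\tilde r_1<\tilde r_2<2a_0$ and $a_1>a_0$ such that: $\eta'(r)>0$ for $0<r<\tilde r_1$ and $\eta'(r)<0$ for $r>\tilde r_1$; $\eta''(r)<0$ for $0<r<\tilde r_2$ and $\eta''(r)>0$ for $r>\tilde r_2$; $\hat\eta(r)<0$ for $0<r<a_0$ and $\hat\eta(r)>0$ for $r>a_0$; $\hat\eta'(r)>0$ for $0<r<a_1$ and $\hat\eta'(r)<0$ for $r>a_1$. Let $N,K$ be positive integers with $K<N-1$ and define $\hat{\mathbf\Psi}^F:(0,\infty)^{2N+1}\to\mathbb R^{2N+1}$ by $\hat\psi^F_j(\mathbf r)=\eta(r_j)+2\eta(2r_j)$ for $-N\le j\le -K$ and for $K\le j\le N$, and $\hat\psi^F_j(\mathbf r)=\eta(r_j)+\eta(r_j+r_{j-1})+\eta(r_j+r_{j+1})+[2\eta(2r_K)-\eta(r_K+r_{K-1})-\eta(r_K+r_{K+1})]$ for $-K+1\le j\le K-1$. Suppose $r_L,r_U$ satisfy $\tilde r_2/2<r_L<r_U$ and $\eta'(r_U)+12\eta'(2r_L)\ge0$. If $\mathbf\Phi=(\Phi_{-N},\dots,\Phi_N)\in\mathbb R^{2N+1}$ satisfies $\eta(r_L)+4\eta(2r_L)-2\eta(2r_U)<\Phi_j<\eta(r_U)+4\eta(2r_U)-2\eta(2r_L)$ for $j=-N,\dots,N$, then $\hat{\mathbf\Psi}^F(\mathbf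 r)=\mathbf\Phi$ has a unique solution $\mathbf r$ in $\Omega=(r_L,r_U)^{2N+1}$.
   Context: $\hat{\mathbf\Psi}^F$ is the (symmetrized) internal conjugate force of the force-based quasicontinuum approximation of a one-dimensional atomic chain with nearest and next-nearest neighbour interactions given by the pair potential $\phi$, and $\mathbf\Phi$ is an external conjugate force. *)

From Stdlib Require Import Reals ZArith Lra.
From Coquelicot Require Import Coquelicot.
Open Scope R_scope.

Definition etahat (eta : R -> R) (r : R) : R := eta r + 2 * eta (2 * r).

(* A configuration is r : Z -> R, only indices -N..N are meaningful.
   psi_j = eta(r_j) + 2 eta(2 r_j)                    for K <= |j| (<= N),
   psi_j = eta(r_j) + eta(r_j + r_{j-1}) + eta(r_j + r_{j+1})
           + [2 eta(2 r_K) - eta(r_K + r_{K-1}) - eta(r_K + r_{K+1})]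
                                                     for |j| <= K-1. *)
Definition psiF (eta : R -> R) (K : Z) (r : Z -> R) (j : Z) : R :=
  if (K <=? Z.abs j)%Z then eta (r j) + 2 * eta (2 * r j)
  else eta (r j) + eta (r j + r (j - 1)%Z) + eta (r j + r (j + 1)%Z)
       + (2 * eta (2 * r K) - eta (r K + r (K - 1)%Z) - eta (r K + r (K + 1)%Z)).

Definition in_range (N : nat) (j : Z) : Prop := (- Z.of_nat N <= j <= Z.of_nat N)%Z.

(* On [rL, rU] the pair term eta increases with slope at least p = eta'(rU), and on
   [2 rL, 2 rU] it decreases with slope at least -m = eta'(2 rL); the hypothesis
   eta'(rU) + 12 eta'(2 rL) >= 0 makes p large compared with m.  In the continuum
   region |j| >= K the equations decouple into etahat(r_j) = Phi_j, and etahat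
   increases with slope p - 4 m > 0 on [rL, rU], so each has exactly one root c_j.
   In the atomistic region, with r_K and r_(K+1) fixed to c_K and c_(K+1), solving
   the j-th equation for r_j given its neighbours is a map on configurations with
   values in [rL, rU] that is a sup-norm contraction with constant 3 m / (p - 2 m) < 1,
   so the Banach fixed point theorem gives existence and uniqueness. *)

From Stdlib Require Import Reals ZArith.
From Coquelicot Require Import Coquelicot.
From Stdlib Require Import Ranalysis5 Lra Lia Classical ClassicalEpsilon FunctionalExtensionality.
Open Scope R_scope.

Lemma increment_lb (f df : R -> R) (a b lo : R) : a <= b ->
  (forall x, a <= x <= b -> is_derive f x (df x)) ->
  (forall x, a <= x <= b -> lo <= df x) -> lo * (b - a) <= f b - f a.
Proof.
  intros Hab Hd Hlo. destruct (Req_dec a b) as [<-|Hne]; [lra|].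
  destruct (MVT_cor2 f df a b) as [c [-> Hc]]; [lra| |].
  - intros x Hx. apply is_derive_Reals, Hd; lra.
  - apply Rmult_le_compat_r; [lra| apply Hlo; lra].
Qed.

Lemma increment_ub (f df : R -> R) (a b hi : R) : a <= b ->
  (forall x, a <= x <= b -> is_derive f x (df x)) ->
  (forall x, a <= x <= b -> df x <= hi) -> f b - f a <= hi * (b - a).
Proof.
  intros Hab Hd Hhi. destruct (Req_dec a b) as [<-|Hne]; [lra|].
  destruct (MVT_cor2 f df a b) as [c [-> Hc]]; [lra| |].
  - intros x Hx. apply is_derive_Reals, Hd; lra.
  - apply Rmult_le_compat_r; [lra| apply Hhi; lra].
Qed.

Lemma concave_increment_lb (f df d2f : R -> R) (a b s t : R) :
  (forall x, a <= x <= b -> is_derive f x (df x)) ->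
  (forall x, a <= x <= b -> is_derive df x (d2f x)) ->
  (forall x, a <= x <= b -> d2f x <= 0) ->
  a <= s <= t -> t <= b -> df b * (t - s) <= f t - f s.
Proof.
  intros Hf Hdf Hd2f Hst Htb.
  apply (increment_lb f df); [lra| intros x Hx; apply Hf; lra |].
  intros x Hx.
  assert (df b - df x <= 0 * (b - x)); [|lra].
  apply (increment_ub df d2f); [lra| intros y Hy; apply Hdf; lra | intros y Hy; apply Hd2f; lra].
Qed.

Lemma convex_increment_lb (f df d2f : R -> R) (a b s t : R) :
  (forall x, a <= x <= b -> is_derive f x (df x)) ->
  (forall x, a <= x <= b -> is_derive df x (d2f x)) ->
  (forall x, a <= x <= b -> 0 <= d2f x) ->
  a <= s <= t -> t <= b -> df a * (t - s) <= f t - f s.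
Proof.
  intros Hf Hdf Hd2f Hst Htb.
  apply (increment_lb f df); [lra| intros x Hx; apply Hf; lra |].
  intros x Hx.
  assert (0 * (x - a) <= df x - df a); [|lra].
  apply (increment_lb df d2f); [lra| intros y Hy; apply Hdf; lra | intros y Hy; apply Hd2f; lra].
Qed.

Lemma expanding_dist (f : R -> R) (a b c s t : R) :
  (forall s t, a <= s <= t -> t <= b -> c * (t - s) <= f t - f s) ->
  a <= s <= b -> a <= t <= b -> c * Rabs (t - s) <= Rabs (f t - f s).
Proof.
  intros Hf Hs Ht. destruct (Rle_dec s t).
  - specialize (Hf s t ltac:(lra) ltac:(lra)).
    rewrite (Rabs_right (t - s)) by lra. eapply Rle_trans; [exact Hf| apply Rle_abs].
  - specialize (Hf t s ltac:(lra) ltac:(lra)).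
    rewrite (Rabs_left1 (t - s)), Rabs_minus_sym by lra.
    eapply Rle_trans; [|apply Rle_abs]. lra.
Qed.

Lemma expanding_inj (f : R -> R) (a b c s t : R) : 0 < c ->
  (forall s t, a <= s <= t -> t <= b -> c * (t - s) <= f t - f s) ->
  a <= s <= b -> a <= t <= b -> f s = f t -> s = t.
Proof.
  intros Hc Hf Hs Ht Hst.
  pose proof (expanding_dist f a b c s t Hf Hs Ht) as H.
  rewrite Hst, Rminus_diag, Rabs_R0 in H.
  pose proof (Rabs_pos (t - s)).
  assert (Rabs (t - s) = 0) as Hts%Rabs_eq_0 by nra. lra.
Qed.

Lemma continuous_comp_plus_r (f : R -> R) (a t : R) :
  continuous f (t + a) -> continuous (fun x => f (x + a)) t.
Proof.
  apply (continuous_comp (fun x => x + a) f).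
  apply (continuous_plus (V := R_NormedModule)); [apply continuous_id| apply continuous_const].
Qed.

Lemma continuous_comp_scal (f : R -> R) (a t : R) :
  continuous f (a * t) -> continuous (fun x => f (a * x)) t.
Proof.
  apply (continuous_comp (fun x => a * x) f).
  apply (continuous_scal_r (V := R_NormedModule) a (fun x => x)), continuous_id.
Qed.

Lemma geometric_small (C q eps : R) : 0 <= C -> 0 <= q < 1 -> 0 < eps ->
  exists N, forall n, (N <= n)%nat -> C * q ^ n < eps.
Proof.
  intros HC Hq Heps.
  destruct (pow_lt_1_zero q ltac:(rewrite Rabs_right; lra) (eps / (C + 1)))
    as [N HN]; [apply Rdiv_lt_0_compat; lra|].
  exists N. intros n Hn. specialize (HN n Hn).
  pose proof (pow_le q n ltac:(lra)).
  rewrite Rabs_right in HN by lra.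
  apply (Rmult_lt_compat_l (C + 1)) in HN; [|lra].
  replace ((C + 1) * (eps / (C + 1))) with eps in HN by (field; lra). nra.
Qed.

Lemma geometric_bound_eq0 (d C q : R) : 0 <= C -> 0 <= q < 1 ->
  (forall n, Rabs d <= C * q ^ n) -> d = 0.
Proof.
  intros HC Hq Hd. destruct (Req_dec d 0) as [|Hne]; [assumption|].
  destruct (geometric_small C q (Rabs d) HC Hq) as [N HN]; [apply Rabs_pos_lt, Hne|].
  specialize (HN N (Nat.le_refl N)). specialize (Hd N). lra.
Qed.

Lemma Un_cv_between (u : nat -> R) (l a b : R) (n : nat) : Un_cv u l ->
  (forall k, a <= u (n + k)%nat <= b) -> a <= l <= b.
Proof.
  intros Hu Hab.
  split; apply Rnot_lt_le; intros Hlt;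
    [destruct (Hu (a - l)) as [N HN] | destruct (Hu (l - b)) as [N HN]]; try lra;
    specialize (HN (n + N)%nat ltac:(lia)); specialize (Hab N);
    apply Rabs_def2 in HN; lra.
Qed.

Definition in_box {I : Type} (lo hi : R) (y : I -> R) : Prop := forall i, lo <= y i <= hi.

Section ContractionFixpoint.

Variables (I : Type) (T : (I -> R) -> I -> R) (lo hi q : R).
Hypothesis q_range : 0 <= q < 1.
Hypothesis lo_le_hi : lo <= hi.
Hypothesis T_in_box : forall y, in_box lo hi y -> in_box lo hi (T y).
Hypothesis T_contraction : forall y y' M, in_box lo hi y -> in_box lo hi y' ->
  (forall i, Rabs (y i - y' i) <= M) -> forall i, Rabs (T y i - T y' i) <= q * M.

Lemma iter_in_box n y : in_box lo hi y -> in_box lo hi (Nat.iter n T y).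
Proof. intros Hy. induction n; simpl; auto. Qed.

Lemma iter_contraction_dist n y y' : in_box lo hi y -> in_box lo hi y' ->
  forall i, Rabs (Nat.iter n T y i - Nat.iter n T y' i) <= (hi - lo) * q ^ n.
Proof.
  intros Hy Hy'. induction n as [|n IH]; intros i; simpl.
  - apply Rabs_le_between. specialize (Hy i). specialize (Hy' i). lra.
  - replace ((hi - lo) * (q * q ^ n)) with (q * ((hi - lo) * q ^ n)) by ring.
    apply T_contraction; auto using iter_in_box.
Qed.

Lemma contraction_fixpoint_unique x x' : in_box lo hi x -> in_box lo hi x' ->
  T x = x -> T x' = x' -> x = x'.
Proof.
  intros Hx Hx' Fx Fx'. apply functional_extensionality. intros i.
  apply Rminus_diag_uniq, (geometric_bound_eq0 _ (hi - lo) q); [lra|lra|].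
  assert (Hfix : forall n z, T z = z -> Nat.iter n T z = z).
  { intros n z Hz. induction n as [|n IH]; simpl; [reflexivity|]. now rewrite IH, Hz. }
  intros n. rewrite <- (Hfix n x Fx), <- (Hfix n x' Fx').
  apply iter_contraction_dist; assumption.
Qed.

Theorem contraction_fixpoint : exists x, in_box lo hi x /\ T x = x.
Proof.
  set (x n := Nat.iter n T (fun _ => lo)).
  assert (Hbox0 : in_box lo hi (fun _ : I => lo)) by (intros i; lra).
  assert (Hx : forall n, in_box lo hi (x n)) by (intros n; apply iter_in_box, Hbox0).
  assert (Hgap : forall n k i, Rabs (x (n + k)%nat i - x n i) <= (hi - lo) * q ^ n).
  { intros n k i. unfold x. rewrite Nat.iter_add.
    apply iter_contraction_dist; auto using iter_in_box. }
  assert (Hcauchy : forall i, Cauchy_crit (fun n => x n i)).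
  { intros i eps Heps.
    destruct (geometric_small (2 * (hi - lo)) q eps) as [N HN]; [lra|lra|lra|].
    exists N. intros n m Hn Hm. unfold R_dist.
    specialize (HN N (Nat.le_refl N)).
    pose proof (Hgap N (n - N)%nat i) as Hn'. pose proof (Hgap N (m - N)%nat i) as Hm'.
    replace (N + (n - N))%nat with n in Hn' by lia.
    replace (N + (m - N))%nat with m in Hm' by lia.
    apply Rabs_le_between in Hn', Hm'. apply Rabs_def1; lra. }
  set (L i := proj1_sig (Rcomplete.R_complete _ (Hcauchy i))).
  assert (HL : forall i, Un_cv (fun n => x n i) (L i))
    by (intros i; exact (proj2_sig (Rcomplete.R_complete _ (Hcauchy i)))).
  assert (HLx : forall n i, Rabs (L i - x n i) <= (hi - lo) * q ^ n).
  { intros n i. apply Rabs_le_between'.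
    apply (Un_cv_between _ _ _ _ n (HL i)). intros k. apply Rabs_le_between', Hgap. }
  assert (HLbox : in_box lo hi L).
  { intros i. apply (Un_cv_between _ _ _ _ 0 (HL i)). intros k. apply Hx. }
  exists L. split; [exact HLbox|].
  apply functional_extensionality. intros i.
  apply Rminus_diag_uniq, (geometric_bound_eq0 _ (2 * (hi - lo) * q) q);
    [apply Rmult_le_pos; lra|lra|].
  intros n.
  assert (HT : Rabs (T L i - x (S n) i) <= q * ((hi - lo) * q ^ n)).
  { apply T_contraction; auto. }
  pose proof (HLx (S n) i) as HS. change (q ^ S n) with (q * q ^ n) in HS.
  apply Rabs_le_between in HT, HS. apply Rabs_le_between. lra.
Qed.

End ContractionFixpoint.

Lemma IVT_choice {A : Type} (P : A -> Prop) (F : A -> R -> R) (Y : A -> R) (a b : R) :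
  a < b ->
  (forall x, P x -> (forall t, a <= t <= b -> continuous (F x) t) /\ F x a < Y x < F x b) ->
  exists g : A -> R, forall x, a < g x < b /\ (P x -> F x (g x) = Y x).
Proof.
  intros Hab HF.
  apply (ClassicalEpsilon.choice (fun x t => a < t < b /\ (P x -> F x t = Y x))).
  intros x. destruct (classic (P x)) as [Hx|Hx].
  - destruct (HF x Hx) as [Hc HY].
    destruct (IVT_interv (fun t => F x t - Y x) a b) as [z [Hz HFz]]; [|lra|lra|lra|].
    + intros t Ht. apply continuity_pt_filterlim.
      apply (continuous_minus (V := R_NormedModule) (F x) (fun _ => Y x)).
      * apply Hc, Ht.
      * apply continuous_const.
    + exists z. assert (z <> a) by (intros ->; lra). assert (z <> b) by (intros ->; lra).
      split; [lra| intros _; lra].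
  - exists ((a + b) / 2). split; [lra| tauto].
Qed.

Lemma psiF_ext (eta : R -> R) (K : Z) (r r' : Z -> R) (j : Z) :
  (forall i, (Z.abs (i - j) <= 1 \/ Z.abs (i - K) <= 1)%Z -> r i = r' i) ->
  psiF eta K r j = psiF eta K r' j.
Proof. intros Hr. unfold psiF. rewrite !Hr by lia. reflexivity. Qed.

Lemma psiF_outer (eta : R -> R) (K : Z) (r : Z -> R) (j : Z) :
  (K <= Z.abs j)%Z -> psiF eta K r j = etahat eta (r j).
Proof. intros Hj. unfold psiF. destruct (Z.leb_spec K (Z.abs j)); [reflexivity | lia]. Qed.

Section ForceEquation.

Variables (eta : R -> R) (rL rU m p : R) (N : nat) (K : Z) (Phi : Z -> R).
Hypothesis rL_pos : 0 < rL.
Hypothesis rL_lt_rU : rL < rU.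
Hypothesis eta_continuous : forall x, 0 < x -> continuous eta x.
Hypothesis eta_expanding : forall s t, rL <= s <= t -> t <= rU -> p * (t - s) <= eta t - eta s.
Hypothesis eta_decreasing : forall s t, 2 * rL <= s <= t -> t <= 2 * rU ->
  - m * (t - s) <= eta t - eta s <= 0.
(* Weaker than the paper's [12 m <= p]; it is what gives [p - 4 m > 0] and
   [3 m < p - 2 m]. *)
Hypothesis slope_gap : 5 * m < p.
Hypothesis K_lt_N : (K < Z.of_nat N)%Z.
Hypothesis Phi_bounds : forall j, in_range N j ->
  eta rL + 4 * eta (2 * rL) - 2 * eta (2 * rU) < Phi j
  < eta rU + 4 * eta (2 * rU) - 2 * eta (2 * rL).

Lemma m_ge0 : 0 <= m.
Proof. pose proof (eta_decreasing (2 * rL) (2 * rU) ltac:(lra) ltac:(lra)). nra. Qed.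

Lemma eta_lipschitz u v : 2 * rL <= u <= 2 * rU -> 2 * rL <= v <= 2 * rU ->
  Rabs (eta u - eta v) <= m * Rabs (u - v).
Proof.
  intros Hu Hv. destruct (Rle_dec u v).
  - pose proof (eta_decreasing u v ltac:(lra) ltac:(lra)).
    rewrite (Rabs_left1 (u - v)), (Rabs_right (eta u - eta v)) by lra. lra.
  - pose proof (eta_decreasing v u ltac:(lra) ltac:(lra)).
    rewrite (Rabs_right (u - v)), (Rabs_left1 (eta u - eta v)) by lra. lra.
Qed.

Lemma eta_shift_lipschitz a u v M : rL <= a <= rU -> rL <= u <= rU -> rL <= v <= rU ->
  Rabs (u - v) <= M -> Rabs (eta (a + u) - eta (a + v)) <= m * M.
Proof.
  intros Ha Hu Hv HM. pose proof m_ge0.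
  eapply Rle_trans; [apply eta_lipschitz; lra|].
  replace (a + u - (a + v)) with (u - v) by ring. apply Rmult_le_compat_l; lra.
Qed.

Lemma etahat_expanding s t : rL <= s <= t -> t <= rU ->
  (p - 4 * m) * (t - s) <= etahat eta t - etahat eta s.
Proof.
  intros Hs Ht. unfold etahat.
  pose proof (eta_expanding s t Hs Ht).
  pose proof (eta_decreasing (2 * s) (2 * t) ltac:(lra) ltac:(lra)). lra.
Qed.

Lemma etahat_continuous t : 0 < t -> continuous (etahat eta) t.
Proof.
  intros Ht. unfold etahat.
  apply (continuous_plus (V := R_NormedModule) eta (fun x => 2 * eta (2 * x))).
  - apply eta_continuous, Ht.
  - apply (continuous_scal_r (V := R_NormedModule) 2 (fun x => eta (2 * x))).
    apply continuous_comp_scal, eta_continuous. lra.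
Qed.

Lemma continuum_solution : exists c : Z -> R,
  forall j, rL < c j < rU /\ (in_range N j -> etahat eta (c j) = Phi j).
Proof.
  apply (IVT_choice (in_range N) (fun _ => etahat eta) Phi rL rU rL_lt_rU).
  intros j Hj. split.
  - intros t Ht. apply etahat_continuous. lra.
  - pose proof (Phi_bounds j Hj).
    pose proof (eta_decreasing (2 * rL) (2 * rU) ltac:(lra) ltac:(lra)).
    unfold etahat. lra.
Qed.

Lemma eta_between u : 2 * rL <= u <= 2 * rU -> eta (2 * rU) <= eta u <= eta (2 * rL).
Proof.
  intros Hu.
  pose proof (eta_decreasing (2 * rL) u ltac:(lra) ltac:(lra)).
  pose proof (eta_decreasing u (2 * rU) ltac:(lra) ltac:(lra)). lra.
Qed.

Section Bulk.

Variable c : Z -> R.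
Hypothesis c_solves : forall j, rL < c j < rU /\ (in_range N j -> etahat eta (c j) = Phi j).

(* [psiF eta K r j] at an atomistic site [j] as a function of [t = r j], with the
   interface values [r K] and [r (K + 1)] replaced by the continuum solution. *)
Definition bulk_force (y : Z -> R) (j : Z) (t : R) : R :=
  eta t + eta (t + y (j - 1)%Z) + eta (t + y (j + 1)%Z)
  + (2 * eta (2 * c K) - eta (c K + y (K - 1)%Z) - eta (c K + c (K + 1)%Z)).

Lemma psiF_bulk y j : y K = c K -> y (K + 1)%Z = c (K + 1)%Z -> (Z.abs j < K)%Z ->
  psiF eta K y j = bulk_force y j (y j).
Proof.
  intros HK HK1 Hj. unfold psiF, bulk_force. rewrite HK, HK1.
  destruct (Z.leb_spec K (Z.abs j)); [lia | reflexivity].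
Qed.

Lemma bulk_force_expanding y j : in_box rL rU y ->
  forall s t, rL <= s <= t -> t <= rU ->
  (p - 2 * m) * (t - s) <= bulk_force y j t - bulk_force y j s.
Proof.
  intros Hy s t Hs Ht. unfold bulk_force.
  pose proof (Hy (j - 1)%Z). pose proof (Hy (j + 1)%Z).
  pose proof (eta_expanding s t Hs Ht).
  pose proof (eta_decreasing (s + y (j - 1)%Z) (t + y (j - 1)%Z) ltac:(lra) ltac:(lra)).
  pose proof (eta_decreasing (s + y (j + 1)%Z) (t + y (j + 1)%Z) ltac:(lra) ltac:(lra)).
  lra.
Qed.

Lemma bulk_force_continuous y j t : in_box rL rU y -> rL <= t <= rU ->
  continuous (bulk_force y j) t.
Proof.
  intros Hy Ht. unfold bulk_force.
  pose proof (Hy (j - 1)%Z). pose proof (Hy (j + 1)%Z).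
  apply (continuous_plus (V := R_NormedModule) _ (fun _ => _)); [|apply continuous_const].
  apply (continuous_plus (V := R_NormedModule) _ (fun x => eta (x + _)));
    [apply (continuous_plus (V := R_NormedModule) eta (fun x => eta (x + _)))|];
    try apply continuous_comp_plus_r; apply eta_continuous; lra.
Qed.

Lemma bulk_force_bounds y j : in_box rL rU y -> in_range N j ->
  bulk_force y j rL < Phi j < bulk_force y j rU.
Proof.
  intros Hy Hj. unfold bulk_force.
  pose proof (Phi_bounds j Hj).
  pose proof (Hy (j - 1)%Z). pose proof (Hy (j + 1)%Z). pose proof (Hy (K - 1)%Z).
  destruct (c_solves K) as [HcK _]. destruct (c_solves (K + 1)%Z) as [HcK1 _].
  pose proof (eta_between (rL + y (j - 1)%Z) ltac:(lra)).
  pose proof (eta_between (rL + y (j + 1)%Z) ltac:(lra)).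
  pose proof (eta_between (rU + y (j - 1)%Z) ltac:(lra)).
  pose proof (eta_between (rU + y (j + 1)%Z) ltac:(lra)).
  pose proof (eta_between (2 * c K) ltac:(lra)).
  pose proof (eta_between (c K + y (K - 1)%Z) ltac:(lra)).
  pose proof (eta_between (c K + c (K + 1)%Z) ltac:(lra)).
  lra.
Qed.

Lemma bulk_force_lipschitz y y' j t M : in_box rL rU y -> in_box rL rU y' ->
  (forall i, Rabs (y i - y' i) <= M) -> rL <= t <= rU ->
  Rabs (bulk_force y j t - bulk_force y' j t) <= 3 * m * M.
Proof.
  intros Hy Hy' HM Ht. destruct (c_solves K) as [HcK _].
  pose proof (eta_shift_lipschitz t _ _ M Ht (Hy (j - 1)%Z) (Hy' (j - 1)%Z) (HM _)) as H1.
  pose proof (eta_shift_lipschitz t _ _ M Ht (Hy (j + 1)%Z) (Hy' (j + 1)%Z) (HM _)) as H2.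
  pose proof (eta_shift_lipschitz (c K) _ _ M ltac:(lra) (Hy (K - 1)%Z) (Hy' (K - 1)%Z) (HM _))
    as H3.
  apply Rabs_le_between in H1, H2, H3. apply Rabs_le_between.
  unfold bulk_force. lra.
Qed.

Lemma bulk_solution : exists g : (Z -> R) -> Z -> R, forall y j, rL < g y j < rU /\
  (in_box rL rU y -> in_range N j -> bulk_force y j (g y j) = Phi j).
Proof.
  destruct (IVT_choice (fun yj => in_box rL rU (fst yj) /\ in_range N (snd yj))
    (fun yj => bulk_force (fst yj) (snd yj)) (fun yj => Phi (snd yj)) rL rU rL_lt_rU)
    as [g Hg].
  - intros [y j] [Hy Hj]. split.
    + intros t Ht. apply bulk_force_continuous; assumption.
    + apply bulk_force_bounds; assumption.
  - exists (fun y j => g (y, j)). intros y j.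
    destruct (Hg (y, j)) as [Hb Hsol]. split; [exact Hb|].
    intros Hy Hj. exact (Hsol (conj Hy Hj)).
Qed.

Section Relaxation.

Variable g : (Z -> R) -> Z -> R.
Hypothesis g_solves : forall y j, rL < g y j < rU /\
  (in_box rL rU y -> in_range N j -> bulk_force y j (g y j) = Phi j).

(* One sweep of the nonlinear Jacobi iteration for the atomistic equations. *)
Definition relax (y : Z -> R) (j : Z) : R := if (Z.abs j <? K)%Z then g y j else c j.

Lemma relax_bounds y j : rL < relax y j < rU.
Proof.
  unfold relax. destruct (Z.abs j <? K)%Z.
  - destruct (g_solves y j). lra.
  - destruct (c_solves j). lra.
Qed.

Lemma relax_continuum y j : (K <= Z.abs j)%Z -> relax y j = c j.
Proof. intros Hj. unfold relax. destruct (Z.ltb_spec (Z.abs j) K); [lia | reflexivity]. Qed.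

Lemma relax_contraction y y' M : in_box rL rU y -> in_box rL rU y' ->
  (forall i, Rabs (y i - y' i) <= M) ->
  forall i, Rabs (relax y i - relax y' i) <= 3 * m / (p - 2 * m) * M.
Proof.
  intros Hy Hy' HM i. pose proof m_ge0.
  assert (HM0 : 0 <= M) by (eapply Rle_trans; [apply Rabs_pos | apply (HM i)]).
  destruct (Z.ltb_spec (Z.abs i) K) as [Hi|Hi].
  - assert (Hir : in_range N i) by (unfold in_range; lia).
    unfold relax. destruct (Z.ltb_spec (Z.abs i) K); [|lia].
    destruct (g_solves y i) as [Hg Hgs]. destruct (g_solves y' i) as [Hg' Hgs'].
    pose proof (expanding_dist (bulk_force y i) rL rU (p - 2 * m) (g y' i) (g y i)
      (bulk_force_expanding y i Hy) ltac:(lra) ltac:(lra)) as Hexp.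
    rewrite (Hgs Hy Hir), <- (Hgs' Hy' Hir) in Hexp.
    pose proof (bulk_force_lipschitz y' y i (g y' i) M Hy' Hy
      ltac:(intros j; rewrite Rabs_minus_sym; apply HM) ltac:(lra)).
    apply (Rmult_le_reg_l (p - 2 * m)); [lra|].
    replace ((p - 2 * m) * (3 * m / (p - 2 * m) * M)) with (3 * m * M) by (field; lra).
    lra.
  - rewrite !relax_continuum, Rminus_diag, Rabs_R0 by assumption.
    apply Rmult_le_pos; [apply Rdiv_le_0_compat|]; lra.
Qed.

Lemma relax_fixpoint_solves x : in_box rL rU x -> relax x = x ->
  forall j, in_range N j -> psiF eta K x j = Phi j.
Proof.
  intros Hx Hfix j Hj.
  assert (Hc : forall i, (K <= Z.abs i)%Z -> x i = c i)
    by (intros i Hi; rewrite <- Hfix; apply relax_continuum, Hi).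
  destruct (Z_le_gt_dec K (Z.abs j)) as [Hout|Hin].
  - rewrite psiF_outer, Hc by assumption. apply c_solves, Hj.
  - rewrite psiF_bulk by (try apply Hc; lia).
    assert (Hxj : x j = g x j).
    { rewrite <- (equal_f Hfix j) at 1. unfold relax.
      destruct (Z.ltb_spec (Z.abs j) K); [reflexivity | lia]. }
    rewrite Hxj. apply g_solves; assumption.
Qed.

Section Uniqueness.

Variable r : Z -> R.
Hypothesis r_bounds : forall j, in_range N j -> rL < r j < rU.
Hypothesis r_solves : forall j, in_range N j -> psiF eta K r j = Phi j.

Definition splice (i : Z) : R := if (Z.abs i <? K)%Z then r i else c i.

Lemma solution_continuum j : in_range N j -> (K <= Z.abs j)%Z -> r j = c j.
Proof.
  intros Hj HK. pose proof m_ge0. destruct (c_solves j) as [Hcb Hcs].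
  apply (expanding_inj (etahat eta) rL rU (p - 4 * m)); [lra| exact etahat_expanding| | |].
  - specialize (r_bounds j Hj). lra.
  - lra.
  - rewrite <- (psiF_outer eta K r j HK), (r_solves j Hj), (Hcs Hj). reflexivity.
Qed.

Lemma splice_agrees j : in_range N j -> splice j = r j.
Proof.
  intros Hj. unfold splice. destruct (Z.ltb_spec (Z.abs j) K); [reflexivity|].
  symmetry. apply solution_continuum; [assumption | lia].
Qed.

Lemma splice_in_box : in_box rL rU splice.
Proof.
  intros i. unfold splice. destruct (Z.ltb_spec (Z.abs i) K) as [Hi|Hi].
  - assert (in_range N i) as Hir%r_bounds by (unfold in_range; lia). lra.
  - destruct (c_solves i). lra.
Qed.

Lemma splice_continuum j : (K <= Z.abs j)%Z -> splice j = c j.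
Proof. intros Hj. unfold splice. destruct (Z.ltb_spec (Z.abs j) K); [lia | reflexivity]. Qed.

Lemma splice_relax_fixpoint : relax splice = splice.
Proof.
  apply functional_extensionality. intros i.
  destruct (Z.ltb_spec (Z.abs i) K) as [Hi|Hi];
    [| rewrite relax_continuum, splice_continuum by assumption; reflexivity].
  assert (Hir : in_range N i) by (unfold in_range; lia).
  pose proof m_ge0. destruct (g_solves splice i) as [Hg Hgs].
  unfold relax. destruct (Z.ltb_spec (Z.abs i) K); [|lia].
  apply (expanding_inj (bulk_force splice i) rL rU (p - 2 * m));
    [lra | apply bulk_force_expanding, splice_in_box | lra | apply splice_in_box |].
  rewrite (Hgs splice_in_box Hir), <- psiF_bulk by (try apply splice_continuum; lia).
  rewrite <- (r_solves i Hir). apply psiF_ext.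
  intros j Hj. symmetry. apply splice_agrees. unfold in_range. lia.
Qed.

End Uniqueness.

End Relaxation.

End Bulk.

Theorem psiF_unique_solution : exists r : Z -> R,
  (forall j, in_range N j -> rL < r j < rU) /\
  (forall j, in_range N j -> psiF eta K r j = Phi j) /\
  (forall r' : Z -> R,
     (forall j, in_range N j -> rL < r' j < rU) ->
     (forall j, in_range N j -> psiF eta K r' j = Phi j) ->
     forall j, in_range N j -> r' j = r j).
Proof.
  destruct continuum_solution as [c Hc].
  destruct (bulk_solution c Hc) as [g Hg].
  assert (Hq : 0 <= 3 * m / (p - 2 * m) < 1).
  { pose proof m_ge0. split; [apply Rdiv_le_0_compat; lra|].
    apply Rlt_div_l; lra. }
  assert (Hbox : forall y, in_box rL rU (relax c g y)).
  { intros y j. pose proof (relax_bounds c Hc g Hg y j). lra. }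
  destruct (contraction_fixpoint _ (relax c g) rL rU _ Hq ltac:(lra)
    (fun y _ => Hbox y) (relax_contraction c Hc g Hg)) as [x [Hx Hfix]].
  exists x. split; [|split].
  - intros j _. rewrite <- Hfix. apply relax_bounds; assumption.
  - exact (relax_fixpoint_solves c Hc g Hg x Hx Hfix).
  - intros r' Hr'b Hr's j Hj.
    assert (Hsx : splice c r' = x).
    { apply (contraction_fixpoint_unique _ (relax c g) rL rU _ Hq ltac:(lra)
        (fun y _ => Hbox y) (relax_contraction c Hc g Hg));
        auto using splice_in_box, splice_relax_fixpoint. }
    rewrite <- (splice_agrees c Hc r' Hr'b Hr's j Hj), Hsx. reflexivity.
Qed.

End ForceEquation.

Theorem theorem4p5
  (phi eta eta1 eta2 : R -> R) (a0 rt1 rt2 a1 : R) (N K : nat)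
  (rL rU : R) (Phi : Z -> R) :
  (* phi in C^3((0,oo)), eta = phi', eta1 = eta', eta2 = eta'' continuous *)
  (forall r, 0 < r -> is_derive phi r (eta r)) ->
  (forall r, 0 < r -> is_derive eta r (eta1 r)) ->
  (forall r, 0 < r -> is_derive eta1 r (eta2 r)) ->
  (forall r, 0 < r -> continuous eta2 r) ->
  0 < a0 -> a0 < rt1 -> rt1 < rt2 -> rt2 < 2 * a0 -> a0 < a1 ->
  (forall r, 0 < r < rt1 -> eta1 r > 0) ->
  (forall r, r > rt1 -> eta1 r < 0) ->
  (forall r, 0 < r < rt2 -> eta2 r < 0) ->
  (forall r, r > rt2 -> eta2 r > 0) ->
  (forall r, 0 < r < a0 -> etahat eta r < 0) ->
  (forall r, r > a0 -> etahat eta r > 0) ->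
  (forall r, 0 < r < a1 -> Derive (etahat eta) r > 0) ->
  (forall r, r > a1 -> Derive (etahat eta) r < 0) ->
  (0 < K)%nat -> (K < N - 1)%nat ->
  rt2 / 2 < rL -> rL < rU ->
  eta1 rU + 12 * eta1 (2 * rL) >= 0 ->
  (forall j, in_range N j ->
     eta rL + 4 * eta (2 * rL) - 2 * eta (2 * rU) < Phi j
     < eta rU + 4 * eta (2 * rU) - 2 * eta (2 * rL)) ->
  exists r : Z -> R,
    (forall j, in_range N j -> rL < r j < rU) /\
    (forall j, in_range N j -> psiF eta (Z.of_nat K) r j = Phi j) /\
    (forall r' : Z -> R,
       (forall j, in_range N j -> rL < r' j < rU) ->
       (forall j, in_range N j -> psiF eta (Z.of_nat K) r' j = Phi j) ->
       forall j, in_range N j -> r' j = r j).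
Proof.
  intros _ Heta Heta1 _ Ha0 Ha0rt1 Hrt12 _ _ _ Hneg1 Hneg2 Hpos2 _ _ _ _
    _ HKN HrL HrLU Hgap HPhi.
  assert (Hm : eta1 (2 * rL) < 0) by (apply Hneg1; lra).
  assert (HrU : rU <= rt1).
  { apply Rnot_lt_le. intros HrU. specialize (Hneg1 rU HrU). lra. }
  apply (psiF_unique_solution eta rL rU (- eta1 (2 * rL)) (eta1 rU));
    [lra | lra | | | | lra | lia | exact HPhi].
  - intros x Hx. apply (ex_derive_continuous (V := R_NormedModule)).
    exists (eta1 x). apply Heta, Hx.
  - intros s t Hs Ht. apply (concave_increment_lb eta eta1 eta2 rL rU); try lra.
    + intros x Hx. apply Heta. lra.
    + intros x Hx. apply Heta1. lra.
    + intros x Hx. left. apply Hneg2. lra.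
  - intros s t Hs Ht. rewrite Ropp_involutive. split.
    + apply (convex_increment_lb eta eta1 eta2 (2 * rL) (2 * rU)); try lra.
      * intros x Hx. apply Heta. lra.
      * intros x Hx. apply Heta1. lra.
      * intros x Hx. left. apply Hpos2. lra.
    + assert (eta t - eta s <= 0 * (t - s)); [|lra].
      apply (increment_ub eta eta1); [lra | intros x Hx; apply Heta; lra |].
      intros x Hx. left. apply Hneg1. lra.
Qed.
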